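(* Let $P$ be a finite poset and let $x \in P$ be a $\chi$-point of $P$, i.e. $\chi(P_{>x}) = 1$ where $P_{>x} = \{y \in P \mid y > x\}$. If $h, h' : P \to \mathbb{Z}$ are two functions with $h(y) = h'(y)$ for every $y \in P$ with $y \neq x$, then \[ \int_{P} h \, d\chi = \int_{P} h' \, d\chi . \]
   Context: For a finite poset $P$, the zeta function is the $P \times P$ matrix with $\zeta(x,y)=1$ if $x \le y$ and $0$ otherwise; it is invertible, and the Euler characteristic of $P$ is $\chi(P) = \sum_{x,y \in P} \zeta^{-1}(x,y)$ (this equals the Euler characteristic of the order complex of $P$; $\chi(\emptyset)=0$). A filter of $P$ is a subset $Q$ closed upward ($x \in Q$, $x \le y$ implies $y \in Q$). For a subset $Q$, $\delta_Q : P \to \mathbb{Z}$ is its indicator function. Every function $f : P \to \mathbb{Z}$ can be written as $f = \sum_i a_i \delta_{Q_i}$ with $a_i \in \mathbb{Z}$ and $Q_i$ filters of $P$; the Euler calculus (Euler integral) of $f$ is $\int_P f\, d\chi = \sum_i a_i \chi(Q_i)$, which is independent of the chosen representation. A point $x$ of $P$ is a $\chi$-point if $\chi(P_{>x}) = 1$. *)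

From HB Require Import structures.
From mathcomp Require Import all_boot all_order all_algebra.
From Stdlib Require Import ClassicalEpsilon.
Set Implicit Arguments. Unset Strict Implicit. Unset Printing Implicit Defensive.
Import Order.TTheory GRing.Theory Num.Theory.
Local Open Scope ring_scope.

Section EulerCalculus.
Context {disp : Order.disp_t} {T : finPOrderType disp}.

Definition zeta_mx (A : {set T}) : 'M[int]_(#|A|) :=
  \matrix_(i < #|A|, j < #|A|)
     ((@enum_val T (mem A) i <= @enum_val T (mem A) j)%O : nat)%:Z.

Definition euler_char (A : {set T}) : int :=
  \sum_(i < #|A|) \sum_(j < #|A|) (invmx (zeta_mx A)) i j.

Definition is_filter (Q : {set T}) : bool :=
  [forall x, forall y, ((x \in Q) && (x <= y)%O) ==> (y \in Q)].

Definition delta (Q : {set T}) (y : T) : int := (y \in Q : nat)%:Z.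

Definition is_euler_integral (f : T -> int) (v : int) : Prop :=
  exists s : seq (int * {set T}),
    [/\ all (fun p => is_filter p.2) s,
        forall y, f y = \sum_(p <- s) p.1 * delta p.2 y
      & v = \sum_(p <- s) p.1 * euler_char p.2].

(* The Euler integral, as the (representation-independent) value *)
Definition euler_integral (f : T -> int) : int :=
  epsilon (inhabits 0) (is_euler_integral f).

Definition strict_up (x : T) : {set T} := [set y | (x < y)%O].

Definition chi_point (x : T) : Prop := euler_char (strict_up x) = 1.

End EulerCalculus.

From HB Require Import structures.
From mathcomp Require Import all_boot all_order all_algebra.
From Stdlib Require Import ClassicalEpsilon.
Set Implicit Arguments. Unset Strict Implicit. Unset Printing Implicit Defensive.
Import Order.TTheory GRing.Theory Num.Theory.
Local Open Scope ring_scope.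

(* Let c : P -> Z be the solution of sum_(w >= v) c w = 1 for all v (it exists
   because the system is unitriangular).  The inverse zeta matrix of a filter Q
   sends the constant vector 1 to c restricted to Q, so chi(Q) = sum_(v in Q) c v,
   and by linearity the Euler integral of any f is sum_y f y * c y.  At a
   chi-point, c x = 1 - sum_(w > x) c w = 1 - chi(P_>x) = 0, so the value of f
   at x does not contribute. *)

Section UpperSums.
Variables (I : finType) (r : rel I).
Hypotheses (r_trans : transitive r) (r_refl : reflexive r)
  (r_anti : antisymmetric r).

Definition strict_upper (v : I) : {set I} := [set w | r v w && (w != v)].

Lemma strict_upperS v w : r v w -> strict_upper w \subset strict_upper v.
Proof.
move=> rvw; apply/subsetP => u; rewrite !inE => /andP[rwu neq_uw].
rewrite (r_trans rvw rwu); apply: contraNN neq_uw => /eqP eq_uv.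
by rewrite eq_uv in rwu *; apply/eqP/r_anti; rewrite rvw rwu.
Qed.

Lemma card_strict_upper_lt v w :
  r v w -> w != v -> (#|strict_upper w| < #|strict_upper v|)%N.
Proof.
move=> rvw neq_wv; apply: proper_card; rewrite properE strict_upperS //=.
by apply/subsetPn; exists w; rewrite !inE ?rvw ?neq_wv ?eqxx ?andbF.
Qed.

(* Back substitution, treating the v with exactly k strict upper bounds at stage k.+1. *)
Fixpoint upper_solve_rec (b : I -> int) (k : nat) : I -> int :=
  if k is k'.+1 then fun v =>
    if #|strict_upper v| == k'
    then b v - \sum_(w in strict_upper v) upper_solve_rec b k' w
    else upper_solve_rec b k' v
  else fun _ => 0.

Lemma upper_solve_recP b k v :
  (#|strict_upper v| < k)%N -> \sum_(w | r v w) upper_solve_rec b k w = b v.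
Proof.
elim: k v => [//|k IHk] v; rewrite ltnS leq_eqVlt => /orP[/eqP card_v | lt_v_k].
- rewrite (bigD1 v) //= card_v eqxx.
  rewrite [X in _ - X](eq_bigl (fun w => r v w && (w != v))) => [|w]; last first.
    by rewrite inE.
  rewrite [X in _ + X](eq_bigr (upper_solve_rec b k)) ?subrK // => w /andP[rvw neq_wv].
  by rewrite /= ifN // neq_ltn -card_v card_strict_upper_lt.
- rewrite -(IHk v lt_v_k); apply: eq_bigr => w rvw /=.
  have le_wv : (#|strict_upper w| <= #|strict_upper v|)%N.
    exact: subset_leq_card (strict_upperS rvw).
  by rewrite ifN // neq_ltn (leq_ltn_trans le_wv lt_v_k).
Qed.

Definition upper_solve (b : I -> int) : I -> int := upper_solve_rec b #|I|.+1.

Lemma upper_solveP b v : \sum_(w | r v w) upper_solve b w = b v.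
Proof. by apply: upper_solve_recP; rewrite ltnS max_card. Qed.

End UpperSums.

Section EulerIntegral.
Context {disp : Order.disp_t} {T : finPOrderType disp}.

Lemma zeta_mx_unit (A : {set T}) : zeta_mx A \in unitmx.
Proof.
pose r i j := (@enum_val T (mem A) i <= @enum_val T (mem A) j)%O.
have r_trans : transitive r by move=> ? ? ?; apply: le_trans.
have r_refl : reflexive r by move=> ?; apply: lexx.
have r_anti : antisymmetric r by move=> i j /le_anti /enum_val_inj.
pose X := \matrix_(i, j) upper_solve r (fun v => (v == j : nat)%:Z) i.
suff /mulmx1_unit[] : zeta_mx A *m X = 1%:M by [].
apply/matrixP => i j; rewrite !mxE.
rewrite (_ : (i == j)%:R = (i == j : nat)%:Z); last by case: (i == j).
have <- := upper_solveP r_trans r_refl r_anti (fun v => (v == j : nat)%:Z) i.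
rewrite [RHS]big_mkcond; apply: eq_bigr => k _; rewrite !mxE /r.
by case: (_ <= _)%O; rewrite ?mul1r ?mul0r.
Qed.

Definition chi_weight : T -> int := upper_solve (<=%O : rel T) (fun _ => 1).

Lemma chi_weightP v : \sum_(w | (v <= w)%O) chi_weight w = 1.
Proof. exact: upper_solveP le_trans lexx le_anti _ _. Qed.

Lemma is_filter_upper (p : pred T) :
  (forall a b, p a -> (a <= b)%O -> p b) -> @is_filter _ T [set y | p y].
Proof.
move=> p_up; apply/forallP => a; apply/forallP => b.
by apply/implyP => /andP[]; rewrite !inE; apply: p_up.
Qed.

Lemma is_filter_strict_up (x : T) : is_filter (strict_up x).
Proof. by apply: is_filter_upper => a b; apply: lt_le_trans. Qed.

Lemma euler_char_filter (Q : {set T}) :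
  is_filter Q -> euler_char Q = \sum_(v in Q) chi_weight v.
Proof.
move=> /forallP Q_up.
pose c := \col_(i < #|Q|) chi_weight (@enum_val T (mem Q) i).
have zeta_c : zeta_mx Q *m c = const_mx 1.
  apply/matrixP => i j; rewrite !mxE -(chi_weightP (enum_val i)).
  rewrite (eq_bigr (fun k => if (enum_val i <= enum_val k)%O
                             then chi_weight (enum_val k) else 0)); last first.
    by move=> k _; rewrite !mxE; case: (_ <= _)%O; rewrite ?mul1r ?mul0r.
  rewrite -big_mkcond -(big_enum_val_cond (fun w => (enum_val i <= w)%O)) /=.
  apply: eq_bigl => w; apply/andP/idP => [[] //|le_iw]; split=> //.
  by move: (Q_up (enum_val i)) => /forallP/(_ w); rewrite enum_valP le_iw.
rewrite /euler_char [RHS]big_enum_val; apply: eq_bigr => i _.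
have /(congr1 (fun M : 'cV_#|Q| => M i ord0)) := congr1 (mulmx (invmx (zeta_mx Q))) zeta_c.
rewrite mulmxA mulVmx ?zeta_mx_unit // mul1mx !mxE => ->.
by apply: eq_bigr => j _; rewrite !mxE mulr1.
Qed.

Lemma is_euler_integral_weight (f : T -> int) v :
  is_euler_integral f v -> v = \sum_y f y * chi_weight y.
Proof.
case=> s [/allP s_filters f_sum ->].
under [RHS]eq_bigr => y _ do rewrite f_sum big_distrl /=.
rewrite exchange_big /= big_seq [RHS]big_seq; apply: eq_bigr => p ps.
rewrite euler_char_filter ?s_filters // big_distrr /= [LHS]big_mkcond /=.
by apply: eq_bigr => y _; rewrite /delta; case: (y \in p.2); rewrite ?mulr1 ?mulr0 ?mul0r.
Qed.

(* f is the alternating sum of f y times the indicators of P_>=y and P_>y. *)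
Lemma is_euler_integral_exists (f : T -> int) : exists v, is_euler_integral f v.
Proof.
pose s := [seq (f y, [set z | (y <= z)%O]) | y <- enum T]
          ++ [seq (- f y, strict_up y) | y <- enum T].
exists (\sum_(p <- s) p.1 * euler_char p.2), s; split=> //.
- rewrite all_cat; apply/andP; split; apply/allP => _ /mapP[y _ ->] /=.
    by apply: is_filter_upper => a b; apply: le_trans.
  exact: is_filter_strict_up.
- move=> z; rewrite big_cat !big_map /= -big_split /= -enumT big_enum /=.
  rewrite (bigD1 z) //= big1 ?addr0 => [|y neq_yz].
    by rewrite /delta !inE lexx ltxx mulr1 mulr0 subr0.
  rewrite /delta !inE lt_neqAle neq_yz /=.
  by case: (y <= z)%O; rewrite ?mulr1 ?mulr0 ?subrr.
Qed.

Lemma euler_integralE (f : T -> int) : euler_integral f = \sum_y f y * chi_weight y.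
Proof.
apply: is_euler_integral_weight; rewrite /euler_integral.
exact: epsilon_spec (is_euler_integral_exists f).
Qed.

Lemma chi_weight_chi_point (x : T) : chi_point x -> chi_weight x = 0.
Proof.
rewrite /chi_point euler_char_filter ?is_filter_strict_up // => sum_up.
have := chi_weightP x; rewrite (bigD1 x) //=.
rewrite (eq_bigl (fun w => w \in strict_up x)) => [|w]; last first.
  by rewrite inE lt_def andbC.
by rewrite sum_up => /(congr1 (fun t => t - 1)); rewrite addrK subrr.
Qed.

End EulerIntegral.

Theorem proposition4p1 (disp : Order.disp_t) (P : finPOrderType disp) (x : P)
  (hx : chi_point x) (h h' : P -> int)
  (hh : forall y : P, y != x -> h y = h' y) :
  euler_integral h = euler_integral h'.
Proof.
rewrite !euler_integralE; apply: eq_bigr => y _.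
have [->|neq_yx] := eqVneq y x; first by rewrite chi_weight_chi_point ?mulr0.
by rewrite hh.
Qed.
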